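(* Let $p\in\mathbb{N}^*$ and $\gamma\geq1$. Let $V$ be a subset of a normed vector space and let $F:\mathbb{R}^p\to V$ be a homeomorphism which is Lip-$\gamma$. Endow $V$ with the $F$-induced atlas $(F(B_p(x,1)),\phi_x\circ F^{-1})_{x\in I}$. Then the inverses of the chart maps, i.e. the maps $(\phi_x\circ F^{-1}|_{F(B_p(x,1))})^{-1}:B_p(0,1)\to V$, $x\in I$, are Lip-$\gamma$ in the classical sense, with Lip-$\gamma$ norms bounded uniformly in $x\in I$.
   Context: Lip-$\gamma$ (Stein sense): for $m$ the integer with $0<\gamma-m\le1$, a map $g$ on an open set is Lip-$\gamma$ with norm $\le M$ if it is $m$ times differentiable, $\|D^kg(x)(v)\|\le M\|v\|$ and the Taylor remainders $R_k(x,y)$ defined by $D^kg(x)(v)=\sum_{j=k}^m D^jg(y)\big(\frac{v\otimes(x-y)^{\otimes(j-k)}}{(j-k)!}\big)+R_k(x,y)(v)$ satisfy $\|R_k(x,y)(v)\|\le M\|x-y\|^{\gamma-k}\|v\|$. Standard atlas on $\mathbb{R}^p$: let $(e_i)$ be the canonical basis, $I=\{\sum_{i=1}^p \frac{k_i}{\sqrt p}e_i:k_i\in\mathbb{Z}\}$, $\varphi:\mathbb{R}^p\to\mathbb{R}^p$ a Lip-$\gamma$ map equal to the identity on $B_p(0,1)$ with support in $B_p(0,2)$, and $\phi_x(y)=\varphi(y-x)$; the charts are $(B_p(x,1),\phi_x)_{x\in I}$. *)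

From HB Require Import structures.
From mathcomp Require Import all_boot all_order all_algebra.
From mathcomp Require Import all_classical all_reals all_analysis.
Set Implicit Arguments. Unset Strict Implicit. Unset Printing Implicit Defensive.
Import Order.TTheory GRing.Theory Num.Theory.
Import numFieldNormedType.Exports.
Local Open Scope classical_set_scope.
Local Open Scope ring_scope.

Section Defs.
Variables (R : realType) (p : nat).

Definition enorm (v : 'rV[R]_p) : R := Num.sqrt (\sum_(i < p) (v ord0 i) ^+ 2).

Definition eball (c : 'rV[R]_p) (r : R) : set 'rV[R]_p :=
  [set y | enorm (y - c) < r].

(* Iterated directional derivatives:
   dirder g [:: v1; ...; vk] x = D_{v1} ( ... (D_{vk} g) ... ) x
   = D^k g(x)(v1 ⊗ ... ⊗ vk) when g is k times differentiable. *)
Fixpoint dirder (W : normedModType R) (g : 'rV[R]_p -> W) (vs : seq 'rV[R]_p)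
  : 'rV[R]_p -> W :=
  match vs with
  | [::] => g
  | v :: vs' => fun x => derive (dirder g vs') x v
  end.

(* Lip-gamma (Stein sense) on the (open) set U with norm <= M.
   m is the integer with 0 < gamma - m <= 1.  The tensor v is taken to be an
   elementary tensor v1 ⊗ ... ⊗ vk with ||v|| = prod ||vi|| (projective norm). *)
Definition LipGamma (W : normedModType R) (gamma : R) (U : set 'rV[R]_p)
  (M : R) (g : 'rV[R]_p -> W) : Prop :=
  forall m : nat, 0 < gamma - m%:R <= 1 ->
  [/\
      (forall (vs : seq 'rV[R]_p) x, (size vs < m)%N -> U x ->
          differentiable (dirder g vs) x),
      (forall (vs : seq 'rV[R]_p) x, (size vs <= m)%N -> U x ->
          `|dirder g vs x| <= M * \prod_(v <- vs) enorm v) &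
      (forall (vs : seq 'rV[R]_p) x y, (size vs <= m)%N -> U x -> U y ->
          `|dirder g vs x
            - \sum_(size vs <= j < m.+1)
                (((j - size vs)`!)%:R^-1 *:
                   dirder g (vs ++ nseq (j - size vs) (x - y)) y)|
          <= M * (enorm (x - y)) `^ (gamma - (size vs)%:R)
               * \prod_(v <- vs) enorm v)].

Definition latticeI : set 'rV[R]_p :=
  [set x | exists k : 'I_p -> int,
      x = \row_(i < p) ((k i)%:~R / Num.sqrt (p%:R))].

Definition std_atlas_bump (gamma : R) (phi : 'rV[R]_p -> 'rV[R]_p) : Prop :=
  [/\ exists M, LipGamma gamma setT M phi,
      (forall y, eball 0 1 y -> phi y = y) &
      closure [set y | phi y != 0] `<=` eball 0 2].

(* F-induced chart map at x: phi_x o F^{-1}, phi_x(y) = phi (y - x). *)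
Definition Fchart (E : normedModType R) (Finv : E -> 'rV[R]_p)
  (phi : 'rV[R]_p -> 'rV[R]_p) (x : 'rV[R]_p) : E -> 'rV[R]_p :=
  fun u => phi (Finv u - x).

Definition is_chart_inverse (E : normedModType R) (F : 'rV[R]_p -> E)
  (psi : E -> 'rV[R]_p) (x : 'rV[R]_p) (g : 'rV[R]_p -> E) : Prop :=
  (forall z, eball 0 1 z -> (F @` eball x 1) (g z) /\ psi (g z) = z) /\
  (forall u, (F @` eball x 1) u -> eball 0 1 (psi u) /\ g (psi u) = u).

End Defs.

From HB Require Import structures.
From mathcomp Require Import all_boot all_order all_algebra.
From mathcomp Require Import all_classical all_reals all_analysis.
Import Order.TTheory GRing.Theory Num.Theory.
Import numFieldNormedType.Exports.
Set Implicit Arguments. Unset Strict Implicit. Unset Printing Implicit Defensive.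
Local Open Scope classical_set_scope.
Local Open Scope ring_scope.

(* Since phi is the identity on B_p(0,1), the inverse of the chart at x is the
   translate z |-> F (z + x) of F.  Directional derivatives commute with
   translations and the Taylor remainders only see differences of points, so a
   translate of a Lip-gamma map is Lip-gamma with the same norm: the Lip-gamma
   norm of F bounds all chart inverses at once. *)

Section Translation.
Variables (R : realType) (p : nat) (W : normedModType R).
Implicit Types (g : 'rV[R]_p -> W) (U : set 'rV[R]_p) (a : 'rV[R]_p).

Lemma dirder_translate g a vs :
  dirder (fun z => g (z + a)) vs = (fun z => dirder g vs (z + a)).
Proof.
elim: vs => [//|v vs IH] /=; apply: funext => z; rewrite IH /derive /=.
by congr (lim (_ @ 0^')); apply: funext => h /=; rewrite addrA.
Qed.

Lemma differentiable_translate g a z :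
  differentiable g (z + a) -> differentiable (fun y => g (y + a)) z.
Proof.
by move=> dg; apply: (@differentiable_comp _ _ _ _ (fun y => y + a) g).
Qed.

Lemma LipGamma_translate gamma U M g a :
  LipGamma gamma U M g ->
  LipGamma gamma ((fun z => z + a) @^-1` U) M (fun z => g (z + a)).
Proof.
move=> Lg m hm; have [Ldiff Lbound Ltaylor] := Lg m hm.
split=> [vs z hs Uz | vs z hs Uz | vs z y hs Uz Uy]; rewrite dirder_translate.
- exact/differentiable_translate/Ldiff.
- exact: Lbound.
- under eq_big_nat => j _ do rewrite (dirder_translate g a).
  have -> : z - y = z + a - (y + a) by rewrite opprD addrACA subrr addr0.
  exact: Ltaylor.
Qed.

Lemma LipGamma_subset gamma U U' M g :
  U' `<=` U -> LipGamma gamma U M g -> LipGamma gamma U' M g.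
Proof.
move=> sU Lg m hm; have [Ldiff Lbound Ltaylor] := Lg m hm.
split=> [vs z hs /sU Uz | vs z hs /sU Uz | vs z y hs /sU Uz /sU Uy].
- exact: Ldiff.
- exact: Lbound.
- exact: Ltaylor.
Qed.

End Translation.

Lemma eball_translate (R : realType) (p : nat) (a z : 'rV[R]_p) (r : R) :
  eball a r (z + a) = eball 0 r z.
Proof. by rewrite /eball /= addrK subr0. Qed.

Lemma translate_is_chart_inverse (R : realType) (p : nat) (E : normedModType R)
  (F : 'rV[R]_p -> E) (Finv : E -> 'rV[R]_p) (phi : 'rV[R]_p -> 'rV[R]_p)
  (x : 'rV[R]_p) :
  (forall y, Finv (F y) = y) -> (forall y, eball 0 1 y -> phi y = y) ->
  is_chart_inverse F (Fchart Finv phi x) x (fun z => F (z + x)).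
Proof.
move=> FK phiid; split=> [z z1 | _ [y y1 <-]]; rewrite /Fchart FK.
- split; first by exists (z + x) => //; rewrite eball_translate.
  by rewrite addrK phiid.
- have y1' : eball 0 1 (y - x) by move: y1; rewrite -{1}(subrK x y) eball_translate.
  by rewrite phiid // subrK.
Qed.

Theorem mainTheorem6 (R : realType) (p : nat) (gamma : R)
  (E : normedModType R) (V : set E)
  (F : 'rV[R]_p -> E) (Finv : E -> 'rV[R]_p) (phi : 'rV[R]_p -> 'rV[R]_p) :
  (0 < p)%N -> 1 <= gamma ->
  (* F : R^p -> V is a homeomorphism with inverse Finv *)
  F @` setT = V -> (forall y, Finv (F y) = y) ->
  continuous F -> {within V, continuous Finv} ->
  (* F is Lip-gamma *)
  (exists MF, LipGamma gamma setT MF F) ->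
  (* phi is the std_atlas_bump function of the standard atlas *)
  std_atlas_bump gamma phi ->
  exists M : R, forall x, latticeI x ->
    exists g : 'rV[R]_p -> E,
      is_chart_inverse F (Fchart Finv phi x) x g /\
      LipGamma gamma (eball 0 1) M g.
Proof.
move=> _ _ _ FK _ _ [MF LF] [_ phiid _].
exists MF => x _; exists (fun z => F (z + x)); split.
  exact: translate_is_chart_inverse.
by apply: LipGamma_subset (LipGamma_translate x LF).
Qed.
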